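(* A planar three-body motion $\Gamma(t)$ (Newtonian, in the $xy$-plane, with angular momentum $\Omega\mathbf k$) whose initial position $\Gamma(t_0)$ is not collinear is completely determined by its moduli curve $\bar\Gamma(t)$, its initial position $\Gamma(t_0)$ and its angular momentum vector. The curve $\bar\Gamma(t)$ is a solution of the $\Omega$-reduced Newton's equation $$\ddot I_i=4T_i-\Big(\frac{m_i+2m_{i+1}}{r_{i,i+1}^3}+\frac{m_i+2m_{i+2}}{r_{i,i+2}^3}\Big)I_i-\Big(\frac1{r_{i,i+1}^3}-\frac1{r_{i,i+2}^3}\Big)\big(m_{i+1}I_{i+1}-m_{i+2}I_{i+2}\big),\qquad i\ (\mathrm{mod}\ 3),$$ with kinetic energy terms $T_i=\frac{\dot I_i^2}{8I_i}+\frac12\omega_i^2I_i$, where $\omega_i=\omega_i^0+\frac{\Omega}{I}$. Conversely, each solution curve of this $\Omega$-reduced Newton's equation can be realized as the moduli curve of a three-body motion in the $xy$-plane, with a given (non-collinear) initial position and with $\Omega\mathbf k$ as the conserved angular momentum.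
   Context: Masses $m_1,m_2,m_3>0$, $m_1+m_2+m_3=1$; position vectors $\mathbf a_i$ with $\sum m_i\mathbf a_i=0$; a three-body motion solves Newton's equations $m_i\ddot{\mathbf a}_i=\sum_{j\ne i}\frac{m_im_j}{r_{ij}^3}(\mathbf a_j-\mathbf a_i)$ with $r_{ij}=|\mathbf a_i-\mathbf a_j|$. Angular momentum $\mathbf\Omega=\sum m_i\mathbf a_i\times\dot{\mathbf a}_i$. $I_i=m_i|\mathbf a_i|^2$, $I=\sum I_i$; the mutual distances are given by $r_{jk}^2=\frac{(1-m_i)I-I_i}{m_jm_k}$ for $\{i,j,k\}=\{1,2,3\}$. The moduli curve is the image of the motion modulo rotations (with orientation), described locally by $(I_1,I_2,I_3)$. With $\alpha_j$ the central angle between $\mathbf a_{j+1}$ and $\mathbf a_{j+2}$, $\Delta$ the triangle area and $C_1=-m_1I_1+m_2I_2+m_3I_3$ (cyclic), $\omega_1^0=\frac1I(I_3\dot\alpha_2-I_2\dot\alpha_3)=\frac{1}{8m_1m_2m_3\Delta I}[(C_3I_3-C_2I_2)\frac{\dot I_1}{I_1}-(C_1+2m_2I_3)\dot I_2+(C_1+2m_3I_2)\dot I_3]$, and $\omega_2^0,\omega_3^0$ by cyclic permutation; $\omega_i$ is the scalar angular velocity of $\mathbf a_i$. *)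

From Stdlib Require Import Reals.
From Coquelicot Require Import Coquelicot.
Open Scope R_scope.

Inductive body : Type := B1 | B2 | B3.

Definition nxt (i : body) : body :=
  match i with B1 => B2 | B2 => B3 | B3 => B1 end.

Definition sum3 (f : body -> R) : R := f B1 + f B2 + f B3.

Definition masses_ok (m : body -> R) : Prop :=
  (forall i, 0 < m i) /\ sum3 m = 1.

Definition in_J (lo hi : Rbar) (t : R) : Prop := Rbar_lt lo t /\ Rbar_lt t hi.

Definition signed_area (x y : body -> R) : R :=
  ((x B2 - x B1) * (y B3 - y B1) - (y B2 - y B1) * (x B3 - x B1)) / 2.

Definition noncollinear (x y : body -> R) : Prop := signed_area x y <> 0.

Definition com0 (m x y : body -> R) : Prop :=
  sum3 (fun i => m i * x i) = 0 /\ sum3 (fun i => m i * y i) = 0.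

Definition dist (x y : body -> R) (i j : body) : R :=
  sqrt ((x i - x j) ^ 2 + (y i - y j) ^ 2).

Definition force_x (m x y : body -> R) (i : body) : R :=
  let j := nxt i in let k := nxt j in
  m i * m j * (x j - x i) / (dist x y i j) ^ 3
  + m i * m k * (x k - x i) / (dist x y i k) ^ 3.

Definition force_y (m x y : body -> R) (i : body) : R :=
  let j := nxt i in let k := nxt j in
  m i * m j * (y j - y i) / (dist x y i j) ^ 3
  + m i * m k * (y k - y i) / (dist x y i k) ^ 3.

Definition at_time (f : body -> R -> R) (t : R) : body -> R := fun i => f i t.

Definition is_motion (m : body -> R) (lo hi : Rbar) (x y : body -> R -> R) : Prop :=
  forall t, in_J lo hi t ->
    com0 m (at_time x t) (at_time y t) /\
    (forall i j, i <> j -> (x i t, y i t) <> (x j t, y j t)) /\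
    (forall i,
       ex_derive (x i) t /\ ex_derive (y i) t /\
       is_derive (fun s => Derive (x i) s) t
                 (force_x m (at_time x t) (at_time y t) i / m i) /\
       is_derive (fun s => Derive (y i) s) t
                 (force_y m (at_time x t) (at_time y t) i / m i)).

(* scalar angular momentum Omega (the angular momentum vector is Omega k) *)
Definition angmom (m : body -> R) (x y : body -> R -> R) (t : R) : R :=
  sum3 (fun i => m i * (x i t * Derive (y i) t - y i t * Derive (x i) t)).

Definition Imom (m : body -> R) (x y : body -> R -> R) (i : body) (t : R) : R :=
  m i * ((x i t) ^ 2 + (y i t) ^ 2).

(* Two motions have the same moduli curve: at every time the configurations
   differ by a rotation (an element of SO(2), so orientation is kept). *)
Definition same_moduli_curve (lo hi : Rbar) (x y x' y' : body -> R -> R) : Prop :=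
  forall t, in_J lo hi t -> exists th : R, forall i,
    x' i t = cos th * x i t - sin th * y i t /\
    y' i t = sin th * x i t + cos th * y i t.

(* Iv : values I_i, dIv : values of dI_i/dt, at one time. *)

Definition Itot (Iv : body -> R) : R := sum3 Iv.

(* r_{jk}^2 = ((1 - m_i) I - I_i) / (m_j m_k), {i,j,k} = {1,2,3}:
   squared length of the side opposite to body i *)
Definition rsq_opp (m Iv : body -> R) (i : body) : R :=
  let j := nxt i in let k := nxt j in
  ((1 - m i) * Itot Iv - Iv i) / (m j * m k).

(* r_{i,i+1} is opposite to i+2, r_{i,i+2} is opposite to i+1 *)
Definition r_next (m Iv : body -> R) (i : body) : R := sqrt (rsq_opp m Iv (nxt (nxt i))).
Definition r_prev (m Iv : body -> R) (i : body) : R := sqrt (rsq_opp m Iv (nxt i)).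

(* Heron: 16 Delta^2 = 2(pq+qr+rp) - (p^2+q^2+r^2), p,q,r squared sides *)
Definition heron (m Iv : body -> R) : R :=
  let p := rsq_opp m Iv B1 in let q := rsq_opp m Iv B2 in let r := rsq_opp m Iv B3 in
  2 * (p * q + q * r + r * p) - (p ^ 2 + q ^ 2 + r ^ 2).

(* oriented triangle area Delta; sg = +1 or -1 is the orientation *)
Definition Delta (sg : R) (m Iv : body -> R) : R := sg * sqrt (heron m Iv) / 4.

Definition Cc (m Iv : body -> R) (i : body) : R :=
  let j := nxt i in let k := nxt j in
  - m i * Iv i + m j * Iv j + m k * Iv k.

(* omega_i^0 (cyclic version of the formula for omega_1^0) *)
Definition omega0 (sg : R) (m Iv dIv : body -> R) (i : body) : R :=
  let j := nxt i in let k := nxt j in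
  ((Cc m Iv k * Iv k - Cc m Iv j * Iv j) * (dIv i / Iv i)
   - (Cc m Iv i + 2 * m j * Iv k) * dIv j
   + (Cc m Iv i + 2 * m k * Iv j) * dIv k)
  / (8 * m B1 * m B2 * m B3 * Delta sg m Iv * Itot Iv).

Definition omega (Om sg : R) (m Iv dIv : body -> R) (i : body) : R :=
  omega0 sg m Iv dIv i + Om / Itot Iv.

Definition Tkin (Om sg : R) (m Iv dIv : body -> R) (i : body) : R :=
  (dIv i) ^ 2 / (8 * Iv i) + / 2 * (omega Om sg m Iv dIv i) ^ 2 * Iv i.

Definition reduced_rhs (Om sg : R) (m Iv dIv : body -> R) (i : body) : R :=
  let j := nxt i in let k := nxt j in
  4 * Tkin Om sg m Iv dIv i
  - ((m i + 2 * m j) / (r_next m Iv i) ^ 3 + (m i + 2 * m k) / (r_prev m Iv i) ^ 3) * Iv i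
  - (/ (r_next m Iv i) ^ 3 - / (r_prev m Iv i) ^ 3) * (m j * Iv j - m k * Iv k).

Definition reduced_solution (m : body -> R) (Om sg : R) (lo hi : Rbar)
    (Ic : body -> R -> R) : Prop :=
  forall t, in_J lo hi t ->
    (forall i, 0 < Ic i t) /\
    (forall i, 0 < rsq_opp m (at_time Ic t) i) /\
    0 < heron m (at_time Ic t) /\
    (forall i,
       ex_derive (Ic i) t /\
       is_derive (fun s => Derive (Ic i) s) t
         (reduced_rhs Om sg m (at_time Ic t) (fun j => Derive (Ic j) t) i)).

(* With the centre of mass at the origin, the moments I_i determine the triangle
   up to rotation: r_jk, Delta and omega_i computed from (I_i, dI_i/dt, Omega) are
   the side lengths, the signed area and the angular velocities of the bodies, so
   the right-hand side of the reduced equation is d^2 I_i/dt^2 = 2 m_i |v_i|^2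
   + 2 a_i . F_i evaluated along a Newtonian motion.
   Uniqueness: two motions with the same moduli curve differ by a rotation theta(t),
   and their angular momenta differ by theta' I, so theta is constant.
   Realisation: rotate the triangle with moments I_i(t) and body 1 on the x-axis by
   an angle theta with theta' I = Omega - Omega_ref.  The reduced equation then
   gives a_i . e_i = 0 for the Newton errors e_i = m_i a_i'' - F_i; with
   sum e_i = 0 and sum a_i x e_i = 0 this forces e_i = 0 for a non-collinear
   triangle. *)

From Pilot Require Import Defs.
From Stdlib Require Import Reals Lra FunctionalExtensionality.
From Coquelicot Require Import Coquelicot.
(* Reals also exports names [B1], [Delta] and [dist]; let those of Defs win. *)
Import Defs.
Open Scope R_scope.

(** * Configurations with centre of mass at the origin *)

Definition moments (m px py : body -> R) : body -> R :=
  fun i => m i * (px i ^ 2 + py i ^ 2).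

Definition dmoments (m px py vx vy : body -> R) : body -> R :=
  fun i => 2 * m i * (px i * vx i + py i * vy i).

Definition angmom_conf (m px py vx vy : body -> R) : R :=
  sum3 (fun i => m i * (px i * vy i - py i * vx i)).

Lemma masses_pos (m : body -> R) i : masses_ok m -> 0 < m i.
Proof. now intros [Hm _]. Qed.

Lemma masses_B3 (m : body -> R) : masses_ok m -> m B3 = 1 - m B1 - m B2.
Proof. intros [_ Hs]; unfold sum3 in Hs; lra. Qed.

Lemma com0_B3 (m px py : body -> R) : masses_ok m -> com0 m px py ->
  px B3 = - (m B1 * px B1 + m B2 * px B2) / m B3 /\
  py B3 = - (m B1 * py B1 + m B2 * py B2) / m B3.
Proof.
intros Hm [Hx Hy]; unfold sum3 in Hx, Hy.
pose proof (masses_pos m B3 Hm).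
split; field_simplify_eq; lra.
Qed.

Ltac elim_body3 m px py Hm Hc :=
  let Px := fresh "Px" in let Py := fresh "Py" in
  destruct (com0_B3 m px py Hm Hc) as [Px Py];
  rewrite ?Px, ?Py in *; clear Px Py.

Ltac pose_masses_pos m Hm :=
  pose proof (masses_pos m B1 Hm); pose proof (masses_pos m B2 Hm);
  pose proof (masses_pos m B3 Hm).

Ltac elim_m3 m Hm := rewrite (masses_B3 m Hm) in *.

Lemma rsq_opp_moments (m px py : body -> R) i : masses_ok m -> com0 m px py ->
  rsq_opp m (moments m px py) i =
  (px (nxt i) - px (nxt (nxt i))) ^ 2 + (py (nxt i) - py (nxt (nxt i))) ^ 2.
Proof.
intros Hm Hc; pose_masses_pos m Hm.
unfold rsq_opp, Itot, moments, sum3.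
destruct i; cbn [nxt]; elim_body3 m px py Hm Hc; elim_m3 m Hm; field; lra.
Qed.

Lemma heron_moments (m px py : body -> R) : masses_ok m -> com0 m px py ->
  heron m (moments m px py) = 16 * signed_area px py ^ 2.
Proof.
intros Hm Hc; pose_masses_pos m Hm.
unfold heron, rsq_opp, Itot, moments, sum3, signed_area; cbn [nxt].
elim_body3 m px py Hm Hc; elim_m3 m Hm; field; lra.
Qed.

Lemma Delta_moments (m px py : body -> R) sg :
  masses_ok m -> com0 m px py -> (sg = 1 \/ sg = -1) -> 0 < sg * signed_area px py ->
  Delta sg m (moments m px py) = signed_area px py.
Proof.
intros Hm Hc Hsg Hp; unfold Delta; rewrite heron_moments by auto.
replace (16 * signed_area px py ^ 2) with ((4 * (sg * signed_area px py)) ^ 2)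
  by (destruct Hsg; subst; ring).
rewrite sqrt_pow2 by lra.
destruct Hsg; subst; field.
Qed.

Lemma signed_area_cross (m px py : body -> R) : masses_ok m -> com0 m px py ->
  2 * signed_area px py * m B3 = px B1 * py B2 - py B1 * px B2 /\
  2 * signed_area px py * m B1 = px B2 * py B3 - py B2 * px B3.
Proof.
intros Hm Hc; pose_masses_pos m Hm; unfold signed_area.
elim_body3 m px py Hm Hc; elim_m3 m Hm; split; field; lra.
Qed.

Lemma sqnorm_pos_of_area (m px py : body -> R) i :
  masses_ok m -> com0 m px py -> signed_area px py <> 0 -> 0 < px i ^ 2 + py i ^ 2.
Proof.
intros Hm Hc HA.
destruct (signed_area_cross m px py Hm Hc) as [S1 S2]; pose_masses_pos m Hm.
enough (px i <> 0 \/ py i <> 0) as [Hx | Hy].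
- pose proof (pow2_gt_0 _ Hx); pose proof (pow2_ge_0 (py i)); lra.
- pose proof (pow2_gt_0 _ Hy); pose proof (pow2_ge_0 (px i)); lra.
- destruct (Req_dec (px i) 0) as [Ex|]; [|now left].
  destruct (Req_dec (py i) 0) as [Ey|]; [|now right].
  exfalso; apply HA; destruct i; rewrite Ex, Ey in *; nra.
Qed.

Lemma Itot_moments_pos (m px py : body -> R) :
  masses_ok m -> com0 m px py -> signed_area px py <> 0 -> 0 < Itot (moments m px py).
Proof.
intros Hm Hc HA; unfold Itot, moments, sum3.
pose proof (sqnorm_pos_of_area m px py B1 Hm Hc HA).
pose proof (sqnorm_pos_of_area m px py B2 Hm Hc HA).
pose proof (sqnorm_pos_of_area m px py B3 Hm Hc HA).
pose_masses_pos m Hm; nra.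
Qed.

Lemma Itot_moments_pos_of_distinct (m px py : body -> R) : masses_ok m ->
  (px B1, py B1) <> (px B2, py B2) -> 0 < Itot (moments m px py).
Proof.
intros Hm Hd; unfold Itot, moments, sum3.
pose_masses_pos m Hm.
assert (0 < px B1 ^ 2 + py B1 ^ 2 \/ 0 < px B2 ^ 2 + py B2 ^ 2) as [P|P].
{ destruct (Req_dec (px B1) 0), (Req_dec (py B1) 0), (Req_dec (px B2) 0),
    (Req_dec (py B2) 0); try (left; nra); try (right; nra).
  exfalso; apply Hd; f_equal; congruence. }
all: nra.
Qed.

(* After eliminating body 3 a denominator left by [field] is a hypothesis
   [K <> 0] rescaled by a power of m_3 = 1 - m_1 - m_2, possibly times 2. *)
Ltac nonzero_as_rescaled G H d :=
  let E := fresh in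
  intro E; apply H; transitivity (G / d); [field; lra | rewrite E; field; lra].

Ltac nonzero_up_to c :=
  lazymatch goal with
  | |- ?G <> 0 =>
    first [ lra
          | match goal with
            | H : _ <> 0 |- _ =>
              first [ nonzero_as_rescaled G H 1 | nonzero_as_rescaled G H c
                    | nonzero_as_rescaled G H (c ^ 2) | nonzero_as_rescaled G H (c ^ 3)
                    | nonzero_as_rescaled G H (c ^ 4) | nonzero_as_rescaled G H 2
                    | nonzero_as_rescaled G H (2 * c) | nonzero_as_rescaled G H (2 * c ^ 2)
                    | nonzero_as_rescaled G H (2 * c ^ 3) ]
            end ]
  end.

Lemma omega_moments (m px py vx vy : body -> R) sg i :
  masses_ok m -> com0 m px py -> com0 m vx vy -> (sg = 1 \/ sg = -1) ->
  0 < sg * signed_area px py ->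
  omega (angmom_conf m px py vx vy) sg m (moments m px py) (dmoments m px py vx vy) i
  = (px i * vy i - py i * vx i) / (px i ^ 2 + py i ^ 2).
Proof.
intros Hm Hc Hv Hsg Hp.
assert (HA : signed_area px py <> 0) by (intro E; rewrite E in Hp; lra).
assert (Hpi : px i ^ 2 + py i ^ 2 <> 0)
  by (apply Rgt_not_eq, (sqnorm_pos_of_area m); auto).
assert (HI : Itot (moments m px py) <> 0)
  by (apply Rgt_not_eq, (Itot_moments_pos m); auto).
unfold omega, omega0; rewrite Delta_moments by auto.
pose_masses_pos m Hm.
unfold Cc, Itot, moments, dmoments, angmom_conf, sum3, signed_area in *.
destruct i; cbn [nxt] in *; elim_body3 m vx vy Hm Hv; elim_body3 m px py Hm Hc;
  elim_m3 m Hm; field; repeat split; nonzero_up_to (1 - m B1 - m B2).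
Qed.

Lemma dist_sym (px py : body -> R) i j : dist px py i j = dist px py j i.
Proof. unfold dist; f_equal; ring. Qed.

Lemma dist_pos_of_area (px py : body -> R) i j :
  signed_area px py <> 0 -> i <> j -> 0 < dist px py i j.
Proof.
intros HA Hij; unfold dist; apply sqrt_lt_R0.
destruct (Req_dec (px i) (px j)) as [Ex|Ex].
2:{ pose proof (pow2_gt_0 (px i - px j) ltac:(lra)).
    pose proof (pow2_ge_0 (py i - py j)); lra. }
destruct (Req_dec (py i) (py j)) as [Ey|Ey].
2:{ pose proof (pow2_gt_0 (py i - py j) ltac:(lra)).
    pose proof (pow2_ge_0 (px i - px j)); lra. }
exfalso; apply HA; unfold signed_area.
destruct i, j; try congruence; rewrite ?Ex, ?Ey; field.
Qed.

Lemma distinct_of_area (px py : body -> R) i j : signed_area px py <> 0 -> i <> j ->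
  (px i, py i) <> (px j, py j).
Proof.
intros HA Hij E; injection E as E1 E2.
pose proof (dist_pos_of_area px py i j HA Hij) as D; unfold dist in D.
rewrite E1, E2, !Rminus_diag in D; replace (0 ^ 2 + 0 ^ 2) with 0 in D by ring.
rewrite sqrt_0 in D; lra.
Qed.

Lemma r_next_moments (m px py : body -> R) i : masses_ok m -> com0 m px py ->
  r_next m (moments m px py) i = dist px py i (nxt i).
Proof.
intros Hm Hc; unfold r_next, dist; rewrite rsq_opp_moments by auto.
f_equal; destruct i; cbn [nxt]; ring.
Qed.

Lemma r_prev_moments (m px py : body -> R) i : masses_ok m -> com0 m px py ->
  r_prev m (moments m px py) i = dist px py i (nxt (nxt i)).
Proof.
intros Hm Hc; unfold r_prev, dist; rewrite rsq_opp_moments by auto.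
f_equal; destruct i; cbn [nxt]; ring.
Qed.

Lemma reduced_rhs_moments (m px py vx vy : body -> R) sg i :
  masses_ok m -> com0 m px py -> com0 m vx vy -> (sg = 1 \/ sg = -1) ->
  0 < sg * signed_area px py ->
  reduced_rhs (angmom_conf m px py vx vy) sg m (moments m px py) (dmoments m px py vx vy) i
  = 2 * m i * (vx i ^ 2 + vy i ^ 2)
    + 2 * (px i * force_x m px py i + py i * force_y m px py i).
Proof.
intros Hm Hc Hv Hsg Hp.
assert (HA : signed_area px py <> 0) by (intro E; rewrite E in Hp; lra).
assert (Hpi : px i ^ 2 + py i ^ 2 <> 0)
  by (apply Rgt_not_eq, (sqnorm_pos_of_area m); auto).
assert (HI : Itot (moments m px py) <> 0)
  by (apply Rgt_not_eq, (Itot_moments_pos m); auto).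
unfold reduced_rhs, Tkin; rewrite omega_moments by auto.
rewrite r_next_moments, r_prev_moments by auto; unfold force_x, force_y.
assert (Ha : 0 < dist px py i (nxt i))
  by (apply dist_pos_of_area; auto; destruct i; discriminate).
assert (Hb : 0 < dist px py i (nxt (nxt i)))
  by (apply dist_pos_of_area; auto; destruct i; discriminate).
set (a := dist px py i (nxt i)) in *; set (b := dist px py i (nxt (nxt i))) in *.
clearbody a b; pose_masses_pos m Hm.
unfold Itot, moments, dmoments, angmom_conf, sum3 in *.
destruct i; cbn [nxt] in *; elim_body3 m vx vy Hm Hv; elim_body3 m px py Hm Hc;
  elim_m3 m Hm; field; repeat split; nonzero_up_to (1 - m B1 - m B2).
Qed.

Lemma forces_balanced (m px py : body -> R) :
  signed_area px py <> 0 ->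
  sum3 (force_x m px py) = 0 /\ sum3 (force_y m px py) = 0 /\
  sum3 (fun i => px i * force_y m px py i - py i * force_x m px py i) = 0.
Proof.
intro HA.
assert (H12 : 0 < dist px py B1 B2) by (apply dist_pos_of_area; auto; discriminate).
assert (H13 : 0 < dist px py B1 B3) by (apply dist_pos_of_area; auto; discriminate).
assert (H23 : 0 < dist px py B2 B3) by (apply dist_pos_of_area; auto; discriminate).
unfold sum3, force_x, force_y; cbn [nxt].
rewrite (dist_sym px py B2 B1), (dist_sym px py B3 B1), (dist_sym px py B3 B2).
set (a := dist px py B1 B2) in *; set (b := dist px py B1 B3) in *;
set (c := dist px py B2 B3) in *; clearbody a b c.
repeat split; field; repeat split; lra.
Qed.

Lemma orthogonal_decomp x y ex ey : x ^ 2 + y ^ 2 <> 0 -> x * ex + y * ey = 0 ->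
  let l := (x * ey - y * ex) / (x ^ 2 + y ^ 2) in ex = - l * y /\ ey = l * x.
Proof.
intros Hn H l; unfold l; split.
- transitivity (ex * (x ^ 2 + y ^ 2) / (x ^ 2 + y ^ 2)); [field; auto|].
  replace (ex * (x ^ 2 + y ^ 2)) with (x * (x * ex + y * ey) - (x * ey - y * ex) * y)
    by ring.
  rewrite H; field; auto.
- transitivity (ey * (x ^ 2 + y ^ 2) / (x ^ 2 + y ^ 2)); [field; auto|].
  replace (ey * (x ^ 2 + y ^ 2)) with (y * (x * ex + y * ey) + (x * ey - y * ex) * x)
    by ring.
  rewrite H; field; auto.
Qed.

(* Writing e_i = l_i p_i^perp, p_3 . e_3 = 0 forces l_i = mu m_i (p_1 and p_2 are
   independent), and then the torque is mu I. *)
Lemma tangential_equilibrium_zero (m px py ex ey : body -> R) :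
  masses_ok m -> com0 m px py -> signed_area px py <> 0 ->
  (forall i, px i * ex i + py i * ey i = 0) ->
  sum3 ex = 0 -> sum3 ey = 0 ->
  sum3 (fun i => px i * ey i - py i * ex i) = 0 ->
  forall i, ex i = 0 /\ ey i = 0.
Proof.
intros Hm Hc HA Hd Sx Sy St.
assert (N1 := sqnorm_pos_of_area m px py B1 Hm Hc HA).
assert (N2 := sqnorm_pos_of_area m px py B2 Hm Hc HA).
assert (HI := Itot_moments_pos m px py Hm Hc HA).
destruct (signed_area_cross m px py Hm Hc) as [S1 _].
destruct (orthogonal_decomp _ _ _ _ (Rgt_not_eq _ _ N1) (Hd B1)) as [E1x E1y].
destruct (orthogonal_decomp _ _ _ _ (Rgt_not_eq _ _ N2) (Hd B2)) as [E2x E2y].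
set (l1 := (px B1 * ey B1 - py B1 * ex B1) / (px B1 ^ 2 + py B1 ^ 2)) in *.
set (l2 := (px B2 * ey B2 - py B2 * ex B2) / (px B2 ^ 2 + py B2 ^ 2)) in *.
clearbody l1 l2; unfold sum3 in Sx, Sy, St.
assert (E3x : ex B3 = l1 * py B1 + l2 * py B2) by lra.
assert (E3y : ey B3 = - l1 * px B1 - l2 * px B2) by lra.
pose proof (Hd B3) as D3.
rewrite E3x, E3y in D3; rewrite E1x, E1y, E2x, E2y, E3x, E3y in St.
unfold Itot, moments, sum3 in HI; pose_masses_pos m Hm.
destruct (com0_B3 m px py Hm Hc) as [Px Py]; rewrite Px, Py in D3, St, HI.
assert (Hcross : px B1 * py B2 - py B1 * px B2 <> 0).
{ rewrite <- S1; apply Rmult_integral_contrapositive; split; [|lra].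
  apply Rmult_integral_contrapositive; split; [lra|auto]. }
assert (L : m B2 * l1 = m B1 * l2).
{ assert (D3' : (m B2 * l1 - m B1 * l2) * (px B1 * py B2 - py B1 * px B2) = 0).
  { match type of D3 with ?L = 0 =>
      transitivity (L * m B3); [field; lra | rewrite D3; ring] end. }
  apply Rmult_integral in D3' as [D|D]; [lra|contradiction]. }
assert (Hl2 : l2 = m B2 * l1 / m B1) by (field_simplify_eq; lra).
rewrite Hl2 in St.
match type of HI with 0 < ?I =>
  assert (Hz : l1 * I = 0) by
   (match type of St with ?L = 0 =>
      transitivity (m B1 * L); [field; lra | rewrite St; ring] end) end.
apply Rmult_integral in Hz as [Hz|Hz]; [|lra].
assert (Z2 : l2 = 0) by (rewrite Hl2, Hz; field; lra).
intro i; destruct i.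
- rewrite E1x, E1y, Hz; split; ring.
- rewrite E2x, E2y, Z2; split; ring.
- rewrite E3x, E3y, Hz, Z2; split; ring.
Qed.

(** * Rotations and the reference configuration *)

Lemma cos_sq_add_sin_sq th : cos th ^ 2 + sin th ^ 2 = 1.
Proof. rewrite <- (sin2_cos2 th); unfold Rsqr; ring. Qed.

Definition rot_x (c s : R) (px py : body -> R) : body -> R := fun i => c * px i - s * py i.
Definition rot_y (c s : R) (px py : body -> R) : body -> R := fun i => s * px i + c * py i.

Lemma com0_rot (m px py : body -> R) c s :
  com0 m px py -> com0 m (rot_x c s px py) (rot_y c s px py).
Proof.
unfold com0, sum3, rot_x, rot_y; intros [Hx Hy]; split.
- transitivity (c * (m B1 * px B1 + m B2 * px B2 + m B3 * px B3)
                - s * (m B1 * py B1 + m B2 * py B2 + m B3 * py B3)); [ring|].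
  rewrite Hx, Hy; ring.
- transitivity (s * (m B1 * px B1 + m B2 * px B2 + m B3 * px B3)
                + c * (m B1 * py B1 + m B2 * py B2 + m B3 * py B3)); [ring|].
  rewrite Hx, Hy; ring.
Qed.

Lemma signed_area_rot (px py : body -> R) c s :
  signed_area (rot_x c s px py) (rot_y c s px py) = (c ^ 2 + s ^ 2) * signed_area px py.
Proof. unfold signed_area, rot_x, rot_y; field. Qed.

Lemma moments_rot (m px py : body -> R) c s i :
  moments m (rot_x c s px py) (rot_y c s px py) i = (c ^ 2 + s ^ 2) * moments m px py i.
Proof. unfold moments, rot_x, rot_y; ring. Qed.

Lemma com0_agree_B3 (m px py qx qy : body -> R) : masses_ok m ->
  com0 m px py -> com0 m qx qy ->
  px B1 = qx B1 -> py B1 = qy B1 -> px B2 = qx B2 -> py B2 = qy B2 ->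
  px B3 = qx B3 /\ py B3 = qy B3.
Proof.
intros Hm Hp Hq E1 F1 E2 F2.
destruct (com0_B3 m px py Hm Hp) as [-> ->], (com0_B3 m qx qy Hm Hq) as [-> ->].
rewrite E1, F1, E2, F2; split; reflexivity.
Qed.

(* For q a rotation of p, the cosine and sine of its angle. *)
Definition rot_cos (m px py qx qy : body -> R) : R :=
  sum3 (fun i => m i * (px i * qx i + py i * qy i)) / Itot (moments m px py).
Definition rot_sin (m px py qx qy : body -> R) : R :=
  sum3 (fun i => m i * (px i * qy i - py i * qx i)) / Itot (moments m px py).

Lemma rot_cos_rot (m px py : body -> R) c s : Itot (moments m px py) <> 0 ->
  rot_cos m px py (rot_x c s px py) (rot_y c s px py) = c.
Proof.
intro HI; unfold rot_cos, Itot, moments, sum3, rot_x, rot_y in *.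
field_simplify_eq; [ring | exact HI].
Qed.

Lemma rot_sin_rot (m px py : body -> R) c s : Itot (moments m px py) <> 0 ->
  rot_sin m px py (rot_x c s px py) (rot_y c s px py) = s.
Proof.
intro HI; unfold rot_sin, Itot, moments, sum3, rot_x, rot_y in *.
field_simplify_eq; [ring | exact HI].
Qed.

Lemma rot_cos_self (m px py : body -> R) : Itot (moments m px py) <> 0 ->
  rot_cos m px py px py = 1.
Proof. intro HI; unfold rot_cos, Itot, moments, sum3 in *; field; exact HI. Qed.

Lemma rot_sin_self (m px py : body -> R) : rot_sin m px py px py = 0.
Proof.
unfold rot_sin, sum3.
replace (_ + _ + _) with 0 by ring; apply Rdiv_0_l.
Qed.

Lemma rotation_recovered (m px py qx qy : body -> R) th : Itot (moments m px py) <> 0 ->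
  qx = rot_x (cos th) (sin th) px py -> qy = rot_y (cos th) (sin th) px py ->
  let c := rot_cos m px py qx qy in let s := rot_sin m px py qx qy in
  qx = rot_x c s px py /\ qy = rot_y c s px py /\ c ^ 2 + s ^ 2 = 1.
Proof.
intros HI -> -> c s; unfold c, s; rewrite rot_cos_rot, rot_sin_rot by exact HI.
repeat split; apply cos_sq_add_sin_sq.
Qed.

(* The configuration with moments I_i and orientation sg having body 1 on the positive
   x-axis: |a_1|^2 = I_1 / m_1, a_1 . a_2 = (m_3 I_3 - m_1 I_1 - m_2 I_2) / (2 m_1 m_2)
   and a_1 x a_2 = 2 m_3 Delta; body 3 is placed by the centre of mass condition. *)
Definition ref_r1 (m Iv : body -> R) : R := sqrt (Iv B1 / m B1).

Definition ref_dot12 (m Iv : body -> R) : R :=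
  (m B3 * Iv B3 - m B1 * Iv B1 - m B2 * Iv B2) / (2 * m B1 * m B2).

Definition ref_x (m Iv : body -> R) (i : body) : R :=
  match i with
  | B1 => ref_r1 m Iv
  | B2 => ref_dot12 m Iv / ref_r1 m Iv
  | B3 => - (m B1 * ref_r1 m Iv + m B2 * (ref_dot12 m Iv / ref_r1 m Iv)) / m B3
  end.

Definition ref_y (sg : R) (m Iv : body -> R) (i : body) : R :=
  match i with
  | B1 => 0
  | B2 => 2 * m B3 * Delta sg m Iv / ref_r1 m Iv
  | B3 => - (m B2 * (2 * m B3 * Delta sg m Iv / ref_r1 m Iv)) / m B3
  end.

Lemma ref_r1_pos (m Iv : body -> R) : masses_ok m -> 0 < Iv B1 -> 0 < ref_r1 m Iv.
Proof.
intros Hm H; apply sqrt_lt_R0, Rdiv_lt_0_compat; auto; apply masses_pos, Hm.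
Qed.

Lemma ref_r1_sq (m Iv : body -> R) : masses_ok m -> 0 < Iv B1 ->
  ref_r1 m Iv ^ 2 = Iv B1 / m B1.
Proof.
intros Hm H; unfold ref_r1; rewrite <- Rsqr_pow2, Rsqr_sqrt; auto.
apply Rlt_le, Rdiv_lt_0_compat; auto; apply masses_pos, Hm.
Qed.

Lemma Delta_sq sg (m Iv : body -> R) : (sg = 1 \/ sg = -1) -> 0 <= heron m Iv ->
  Delta sg m Iv ^ 2 = heron m Iv / 16.
Proof.
intros Hsg H; unfold Delta.
replace ((sg * sqrt (heron m Iv) / 4) ^ 2) with (sg ^ 2 * sqrt (heron m Iv) ^ 2 / 16)
  by field.
rewrite <- (Rsqr_pow2 (sqrt _)), Rsqr_sqrt by auto.
destruct Hsg; subst; field.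
Qed.

Lemma sg_Delta_pos sg (m Iv : body -> R) : (sg = 1 \/ sg = -1) -> 0 < heron m Iv ->
  0 < sg * Delta sg m Iv.
Proof.
intros Hsg Hh; unfold Delta; pose proof (sqrt_lt_R0 _ Hh).
destruct Hsg as [-> | ->]; lra.
Qed.

Lemma com0_ref sg (m Iv : body -> R) : masses_ok m -> 0 < Iv B1 ->
  com0 m (ref_x m Iv) (ref_y sg m Iv).
Proof.
intros Hm H; pose proof (ref_r1_pos m Iv Hm H); pose_masses_pos m Hm.
unfold com0, sum3, ref_x, ref_y; split; field; lra.
Qed.

Lemma moments_ref sg (m Iv : body -> R) : masses_ok m -> (sg = 1 \/ sg = -1) ->
  0 < Iv B1 -> 0 <= heron m Iv -> moments m (ref_x m Iv) (ref_y sg m Iv) = Iv.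
Proof.
intros Hm Hsg H Hh; apply functional_extensionality; intro i.
pose proof (ref_r1_pos m Iv Hm H) as Hr; pose proof (ref_r1_sq m Iv Hm H) as Hr2.
pose proof (Delta_sq sg m Iv Hsg Hh) as HD; pose_masses_pos m Hm.
unfold moments; destruct i; unfold ref_x, ref_y, ref_dot12; cbv beta iota;
  set (r := ref_r1 m Iv) in *; set (D := Delta sg m Iv) in *; clearbody r D.
- rewrite Hr2; field; lra.
- transitivity (m B2 * ((m B3 * Iv B3 - m B1 * Iv B1 - m B2 * Iv B2) ^ 2
                 / (2 * m B1 * m B2) ^ 2 + 4 * m B3 ^ 2 * D ^ 2) / r ^ 2);
    [field; split; lra|].
  rewrite Hr2, HD; unfold heron, rsq_opp, Itot, sum3; cbn [nxt].
  elim_m3 m Hm; field; lra.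
- set (d := (m B3 * Iv B3 - m B1 * Iv B1 - m B2 * Iv B2) / (2 * m B1 * m B2)).
  transitivity ((m B1 ^ 2 * r ^ 2 + 2 * m B1 * m B2 * d
     + m B2 ^ 2 * (d ^ 2 + 4 * m B3 ^ 2 * D ^ 2) / r ^ 2) / m B3); [field; split; lra|].
  rewrite Hr2, HD; unfold d, heron, rsq_opp, Itot, sum3; cbn [nxt].
  elim_m3 m Hm; field; lra.
Qed.

Lemma signed_area_ref sg (m Iv : body -> R) : masses_ok m -> 0 < Iv B1 ->
  signed_area (ref_x m Iv) (ref_y sg m Iv) = Delta sg m Iv.
Proof.
intros Hm H; pose proof (ref_r1_pos m Iv Hm H); pose_masses_pos m Hm.
unfold signed_area, ref_x, ref_y.
set (r := ref_r1 m Iv) in *; set (D := Delta sg m Iv) in *; clearbody r D.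
elim_m3 m Hm; field; lra.
Qed.

Lemma ref_dot12_moments (m px py : body -> R) : masses_ok m -> com0 m px py ->
  ref_dot12 m (moments m px py) = px B1 * px B2 + py B1 * py B2.
Proof.
intros Hm Hc; pose_masses_pos m Hm; unfold ref_dot12, moments.
elim_body3 m px py Hm Hc; elim_m3 m Hm; field; lra.
Qed.

Lemma angle_exists c s : c ^ 2 + s ^ 2 = 1 -> exists th, cos th = c /\ sin th = s.
Proof.
intro H.
assert (Hc : -1 <= c <= 1) by (split; nra).
assert (Hs : 1 - c² = s * s) by (unfold Rsqr; lra).
destruct (Rle_dec 0 s) as [P|P].
- exists (acos c); split; [apply cos_acos; auto|].
  rewrite sin_acos, Hs by auto; apply sqrt_square; auto.
- exists (- acos c); rewrite cos_neg, sin_neg; split; [apply cos_acos; auto|].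
  rewrite sin_acos, Hs by auto.
  replace (s * s) with ((- s) * (- s)) by ring; rewrite sqrt_square; lra.
Qed.

Lemma ref_rotation sg (m px py : body -> R) :
  masses_ok m -> com0 m px py -> (sg = 1 \/ sg = -1) -> 0 < sg * signed_area px py ->
  let Iv := moments m px py in
  exists th, rot_x (cos th) (sin th) (ref_x m Iv) (ref_y sg m Iv) = px /\
             rot_y (cos th) (sin th) (ref_x m Iv) (ref_y sg m Iv) = py.
Proof.
intros Hm Hc Hsg Hp Iv.
assert (HA : signed_area px py <> 0) by (intro E; rewrite E in Hp; lra).
pose proof (sqnorm_pos_of_area m px py B1 Hm Hc HA) as N1.
assert (HI1 : 0 < Iv B1) by (apply Rmult_lt_0_compat; auto; apply masses_pos, Hm).
pose proof (ref_r1_pos m Iv Hm HI1) as Hr.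
assert (Hr2 : ref_r1 m Iv ^ 2 = px B1 ^ 2 + py B1 ^ 2).
{ rewrite ref_r1_sq by auto; unfold Iv, moments.
  field; apply Rgt_not_eq, masses_pos, Hm. }
destruct (angle_exists (px B1 / ref_r1 m Iv) (py B1 / ref_r1 m Iv)) as [th [Hcos Hsin]].
{ transitivity ((px B1 ^ 2 + py B1 ^ 2) / ref_r1 m Iv ^ 2); [field; lra|].
  rewrite Hr2; field; lra. }
exists th; rewrite Hcos, Hsin.
pose proof (Delta_moments m px py sg Hm Hc Hsg Hp) as HD.
pose proof (ref_dot12_moments m px py Hm Hc) as Hd.
destruct (signed_area_cross m px py Hm Hc) as [S1 _]; pose_masses_pos m Hm.
assert (Agree12 : forall i, i <> B3 ->
  rot_x (px B1 / ref_r1 m Iv) (py B1 / ref_r1 m Iv) (ref_x m Iv) (ref_y sg m Iv) i = px i /\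
  rot_y (px B1 / ref_r1 m Iv) (py B1 / ref_r1 m Iv) (ref_x m Iv) (ref_y sg m Iv) i = py i).
{ intros i Hi; unfold rot_x, rot_y.
  destruct i; [| |congruence]; unfold ref_x, ref_y; cbv beta iota; fold Iv in HD, Hd;
    rewrite ?HD, ?Hd; set (r := ref_r1 m Iv) in *; clearbody r.
  - split; field; lra.
  - split.
    + transitivity ((px B1 * (px B1 * px B2 + py B1 * py B2)
                     - py B1 * (2 * signed_area px py * m B3)) / r ^ 2); [field; lra|].
      rewrite S1, Hr2; field; lra.
    + transitivity ((py B1 * (px B1 * px B2 + py B1 * py B2)
                     + px B1 * (2 * signed_area px py * m B3)) / r ^ 2); [field; lra|].
      rewrite S1, Hr2; field; lra. }
destruct (Agree12 B1 ltac:(discriminate)) as [E1 F1].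
destruct (Agree12 B2 ltac:(discriminate)) as [E2 F2].
destruct (com0_agree_B3 m _ _ _ _ Hm (com0_rot m _ _ _ _ (com0_ref sg m Iv Hm HI1)) Hc
            E1 F1 E2 F2) as [E3 F3].
split; apply functional_extensionality; intro i; destruct i; auto.
Qed.

Lemma rot_ref sg (m Iv px py : body -> R) th :
  masses_ok m -> (sg = 1 \/ sg = -1) -> 0 < Iv B1 -> 0 < heron m Iv ->
  px = rot_x (cos th) (sin th) (ref_x m Iv) (ref_y sg m Iv) ->
  py = rot_y (cos th) (sin th) (ref_x m Iv) (ref_y sg m Iv) ->
  moments m px py = Iv /\ com0 m px py /\ 0 < sg * signed_area px py.
Proof.
intros Hm Hsg H1 Hh -> ->; split; [|split].
- apply functional_extensionality; intro i.
  rewrite moments_rot, cos_sq_add_sin_sq, Rmult_1_l, moments_ref by (auto; lra).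
  reflexivity.
- apply com0_rot, com0_ref; auto.
- rewrite signed_area_rot, cos_sq_add_sin_sq, Rmult_1_l, signed_area_ref by auto.
  apply sg_Delta_pos; auto.
Qed.

(** * Derivatives on open sets *)

(* [auto_derive] leaves eta-expanded [Derive (fun z => f z)], which [ring] would
   treat as an atom different from [Derive f]. *)
Ltac fold_eta_Derive :=
  repeat match goal with |- context [Derive (fun z => ?f z) ?t] =>
    progress change (Derive (fun z => f z) t) with (Derive f t) end.

Definition derivable_on (J : R -> Prop) (f : R -> R) : Prop :=
  forall t, J t -> ex_derive f t.

Definition derivable2_on (J : R -> Prop) (f : R -> R) : Prop :=
  derivable_on J f /\ derivable_on J (Derive f).

Section Derivable.
Variable J : R -> Prop.

Lemma derivable_on_const c : derivable_on J (fun _ => c).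
Proof. intros t _; apply ex_derive_const. Qed.

Lemma derivable_on_plus f g :
  derivable_on J f -> derivable_on J g -> derivable_on J (fun t => f t + g t).
Proof. intros Hf Hg t Ht; apply (ex_derive_plus f g); auto. Qed.

Lemma derivable_on_opp f : derivable_on J f -> derivable_on J (fun t => - f t).
Proof. intros Hf t Ht; apply (ex_derive_opp f); auto. Qed.

Lemma derivable_on_minus f g :
  derivable_on J f -> derivable_on J g -> derivable_on J (fun t => f t - g t).
Proof. intros Hf Hg t Ht; apply (ex_derive_minus f g); auto. Qed.

Lemma derivable_on_mult f g :
  derivable_on J f -> derivable_on J g -> derivable_on J (fun t => f t * g t).
Proof. intros Hf Hg t Ht; apply (ex_derive_mult f g); auto. Qed.

Lemma derivable_on_inv f : derivable_on J f -> (forall t, J t -> f t <> 0) ->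
  derivable_on J (fun t => / f t).
Proof. intros Hf Hn t Ht; apply (ex_derive_inv f); auto. Qed.

Lemma derivable_on_div f g : derivable_on J f -> derivable_on J g ->
  (forall t, J t -> g t <> 0) -> derivable_on J (fun t => f t / g t).
Proof.
intros Hf Hg Hn; apply derivable_on_mult; auto; apply derivable_on_inv; auto.
Qed.

Lemma derivable_on_pow f n : derivable_on J f -> derivable_on J (fun t => f t ^ n).
Proof.
intros Hf t Ht; destruct (Hf t Ht) as [l Hl]; eexists; apply (is_derive_pow f n t l Hl).
Qed.

Lemma derivable_on_sqrt f : derivable_on J f -> (forall t, J t -> 0 < f t) ->
  derivable_on J (fun t => sqrt (f t)).
Proof.
intros Hf Hp t Ht; destruct (Hf t Ht) as [l Hl]; eexists.
apply (is_derive_sqrt f t l Hl); auto.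
Qed.

Lemma derivable_on_cos f : derivable_on J f -> derivable_on J (fun t => cos (f t)).
Proof.
intros Hf t Ht; apply (ex_derive_comp cos f); auto; eexists; apply is_derive_cos.
Qed.

Lemma derivable_on_sin f : derivable_on J f -> derivable_on J (fun t => sin (f t)).
Proof.
intros Hf t Ht; apply (ex_derive_comp sin f); auto; eexists; apply is_derive_sin.
Qed.

Hypothesis HJ : open J.

Lemma derivable_on_ext (f g : R -> R) :
  (forall s, J s -> f s = g s) -> derivable_on J g -> derivable_on J f.
Proof.
intros E Hg t Ht; apply (ex_derive_ext_loc g f t); auto.
apply (filter_imp J); auto; intros; symmetry; auto.
Qed.

Lemma Derive_ext_on (f g : R -> R) t :
  J t -> (forall s, J s -> f s = g s) -> Derive f t = Derive g t.
Proof. intros Ht E; apply Derive_ext_loc, (filter_imp J); auto. Qed.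

Lemma derivable2_on_const c : derivable2_on J (fun _ => c).
Proof.
split; [apply derivable_on_const|].
apply derivable_on_ext with (fun _ => 0); [|apply derivable_on_const].
intros s _; apply Derive_const.
Qed.

Lemma derivable2_on_plus f g :
  derivable2_on J f -> derivable2_on J g -> derivable2_on J (fun t => f t + g t).
Proof.
intros [Hf Df] [Hg Dg]; split; [apply derivable_on_plus; auto|].
apply derivable_on_ext with (fun s => Derive f s + Derive g s);
  [|apply derivable_on_plus; auto].
intros s Hs; apply Derive_plus; auto.
Qed.

Lemma derivable2_on_opp f : derivable2_on J f -> derivable2_on J (fun t => - f t).
Proof.
intros [Hf Df]; split; [apply derivable_on_opp; auto|].
apply derivable_on_ext with (fun s => - Derive f s); [|apply derivable_on_opp; auto].
intros s Hs; apply Derive_opp.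
Qed.

Lemma derivable2_on_minus f g :
  derivable2_on J f -> derivable2_on J g -> derivable2_on J (fun t => f t - g t).
Proof.
intros [Hf Df] [Hg Dg]; split; [apply derivable_on_minus; auto|].
apply derivable_on_ext with (fun s => Derive f s - Derive g s);
  [|apply derivable_on_minus; auto].
intros s Hs; apply Derive_minus; auto.
Qed.

Lemma derivable2_on_mult f g :
  derivable2_on J f -> derivable2_on J g -> derivable2_on J (fun t => f t * g t).
Proof.
intros [Hf Df] [Hg Dg]; split; [apply derivable_on_mult; auto|].
apply derivable_on_ext with (fun s => Derive f s * g s + f s * Derive g s);
  [|apply derivable_on_plus; apply derivable_on_mult; auto].
intros s Hs; apply Derive_mult; auto.
Qed.

Lemma derivable2_on_inv f : derivable2_on J f -> (forall t, J t -> f t <> 0) ->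
  derivable2_on J (fun t => / f t).
Proof.
intros [Hf Df] Hn; split; [apply derivable_on_inv; auto|].
apply derivable_on_ext with (fun s => - Derive f s / f s ^ 2).
- intros s Hs; apply is_derive_unique.
  apply (is_derive_inv f); try apply Derive_correct; auto.
- apply derivable_on_div; [apply derivable_on_opp; auto | apply derivable_on_pow; auto |].
  intros t Ht; apply pow_nonzero; auto.
Qed.

Lemma derivable2_on_div f g : derivable2_on J f -> derivable2_on J g ->
  (forall t, J t -> g t <> 0) -> derivable2_on J (fun t => f t / g t).
Proof.
intros Hf Hg Hn; apply derivable2_on_mult; auto; apply derivable2_on_inv; auto.
Qed.

Lemma derivable2_on_pow f n : derivable2_on J f -> derivable2_on J (fun t => f t ^ n).
Proof.
intros [Hf Df]; split; [apply derivable_on_pow; auto|].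
apply derivable_on_ext with (fun s => INR n * Derive f s * f s ^ Init.Nat.pred n).
- intros s Hs; apply is_derive_unique.
  apply (is_derive_pow f); apply Derive_correct; auto.
- apply derivable_on_mult; [apply derivable_on_mult; [apply derivable_on_const | auto]|].
  apply derivable_on_pow; auto.
Qed.

Lemma derivable2_on_sqrt f : derivable2_on J f -> (forall t, J t -> 0 < f t) ->
  derivable2_on J (fun t => sqrt (f t)).
Proof.
intros [Hf Df] Hp; split; [apply derivable_on_sqrt; auto|].
apply derivable_on_ext with (fun s => Derive f s / (2 * sqrt (f s))).
- intros s Hs; apply is_derive_unique.
  apply (is_derive_sqrt f); try apply Derive_correct; auto.
- apply derivable_on_div; auto.
  + apply derivable_on_mult; [apply derivable_on_const | apply derivable_on_sqrt; auto].
  + intros t Ht; specialize (Hp t Ht); pose proof (sqrt_lt_R0 _ Hp); lra.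
Qed.

Lemma Derive_cos_comp f t : ex_derive f t ->
  Derive (fun s => cos (f s)) t = - sin (f t) * Derive f t.
Proof. intro Hf; apply is_derive_unique; auto_derive; auto; fold_eta_Derive; ring. Qed.

Lemma Derive_sin_comp f t : ex_derive f t ->
  Derive (fun s => sin (f s)) t = cos (f t) * Derive f t.
Proof. intro Hf; apply is_derive_unique; auto_derive; auto; fold_eta_Derive; ring. Qed.

Lemma derivable2_on_cos f : derivable2_on J f -> derivable2_on J (fun t => cos (f t)).
Proof.
intros [Hf Df]; split; [apply derivable_on_cos; auto|].
apply derivable_on_ext with (fun s => - sin (f s) * Derive f s).
- intros s Hs; apply Derive_cos_comp; auto.
- apply derivable_on_mult; auto; apply derivable_on_opp, derivable_on_sin; auto.
Qed.

Lemma derivable2_on_sin f : derivable2_on J f -> derivable2_on J (fun t => sin (f t)).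
Proof.
intros [Hf Df]; split; [apply derivable_on_sin; auto|].
apply derivable_on_ext with (fun s => cos (f s) * Derive f s).
- intros s Hs; apply Derive_sin_comp; auto.
- apply derivable_on_mult; auto; apply derivable_on_cos; auto.
Qed.

End Derivable.

Ltac solve_derivable_on :=
  repeat match goal with
  | |- derivable_on _ (fun _ => ?c) => apply derivable_on_const
  | |- derivable_on _ (fun s => _ + _) => apply derivable_on_plus
  | |- derivable_on _ (fun s => _ - _) => apply derivable_on_minus
  | |- derivable_on _ (fun s => _ * _) => apply derivable_on_mult
  | |- derivable_on _ (fun s => - _) => apply derivable_on_opp
  | |- derivable_on _ (fun s => _ / _) => apply derivable_on_div
  | |- derivable_on _ (fun s => _ ^ _) => apply derivable_on_pow
  | T : forall i, derivable2_on ?J (@?f i) |- derivable_on ?J _ =>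
      first [exact (proj1 (T _)) | exact (proj2 (T _))]
  end.

Ltac solve_derivable2_on HJ :=
  repeat match goal with
  | |- derivable2_on _ (fun _ => ?c) => apply (derivable2_on_const _ HJ)
  | |- derivable2_on _ (fun s => _ + _) => apply (derivable2_on_plus _ HJ)
  | |- derivable2_on _ (fun s => _ - _) => apply (derivable2_on_minus _ HJ)
  | |- derivable2_on _ (fun s => _ * _) => apply (derivable2_on_mult _ HJ)
  | |- derivable2_on _ (fun s => - _) => apply (derivable2_on_opp _ HJ)
  | |- derivable2_on _ (fun s => _ / _) => apply (derivable2_on_div _ HJ)
  | |- derivable2_on _ (fun s => _ ^ _) => apply (derivable2_on_pow _ HJ)
  | |- derivable2_on _ (fun s => sqrt _) => apply (derivable2_on_sqrt _ HJ)
  | |- derivable2_on _ (fun s => cos _) => apply (derivable2_on_cos _ HJ)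
  | |- derivable2_on _ (fun s => sin _) => apply (derivable2_on_sin _ HJ)
  | T : forall i, derivable2_on ?J (?f i) |- derivable2_on ?J (fun s => ?f ?i s) => exact (T i)
  | T : forall i, derivable2_on ?J (?f i) |- derivable2_on ?J (?f ?i) => exact (T i)
  | T : derivable2_on ?J ?f |- derivable2_on ?J ?f => exact T
  end.

Lemma open_in_J lo hi : open (in_J lo hi).
Proof.
intros t [H1 H2]; apply filter_and.
- apply (open_Rbar_gt' (Finite t) lo H1).
- apply (open_Rbar_lt' (Finite t) hi H2).
Qed.

Lemma in_J_between lo hi a b c :
  in_J lo hi a -> in_J lo hi b -> Rmin a b <= c <= Rmax a b -> in_J lo hi c.
Proof.
unfold in_J, Rmin, Rmax; destruct (Rle_dec a b), lo, hi; simpl; intros; lra.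
Qed.

Lemma in_J_const lo hi (f : R -> R) (t0 t : R) : in_J lo hi t0 -> in_J lo hi t ->
  (forall s, in_J lo hi s -> is_derive f s 0) -> f t = f t0.
Proof.
intros H0 H1 Hd.
destruct (MVT_gen f t0 t (fun _ => 0)) as [c [_ Hc]].
- intros z Hz; apply Hd, (in_J_between lo hi t0 t); auto; lra.
- intros z Hz; apply continuity_pt_filterlim.
  apply (ex_derive_continuous f); eexists; apply Hd, (in_J_between lo hi t0 t); auto.
- lra.
Qed.

Lemma in_J_primitive lo hi (g : R -> R) (t0 th0 : R) :
  in_J lo hi t0 -> derivable_on (in_J lo hi) g ->
  exists th, th t0 = th0 /\ forall t, in_J lo hi t -> is_derive th t (g t).
Proof.
intros H0 Dg.
assert (Gc : forall z, in_J lo hi z -> continuous g z)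
  by (intros z Hz; apply (ex_derive_continuous g), Dg, Hz).
exists (fun t => th0 + RInt g t0 t); split.
- rewrite RInt_point; unfold zero; simpl; ring.
- intros t Ht.
  assert (HR : is_derive (fun b => RInt g t0 b) t (g t)).
  { apply (is_derive_RInt g (fun b => RInt g t0 b) t0 t); [|apply Gc; auto].
    apply (filter_imp (in_J lo hi)); [|apply open_in_J; auto].
    intros b Hb; apply (RInt_correct g t0 b), ex_RInt_continuous.
    intros z Hz; apply Gc, (in_J_between lo hi t0 b); auto. }
  pose proof (is_derive_plus _ _ t zero (g t) (is_derive_const th0 t) HR) as H.
  rewrite plus_zero_l in H; exact H.
Qed.

Lemma unit_circle_rigid (J : R -> Prop) (c s : R -> R) t : open J -> J t ->
  ex_derive c t -> ex_derive s t -> (forall u, J u -> c u ^ 2 + s u ^ 2 = 1) ->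
  c t * Derive s t - s t * Derive c t = 0 -> Derive c t = 0 /\ Derive s t = 0.
Proof.
intros HJ Ht Hc Hs H1 W.
assert (V : c t * Derive c t + s t * Derive s t = 0).
{ enough (DD : 2 * (c t * Derive c t + s t * Derive s t) = 0) by lra.
  rewrite <- (Derive_const 1 t), <- (Derive_ext_on J HJ _ _ t Ht H1).
  symmetry; apply is_derive_unique; auto_derive; [repeat split; auto|].
  fold_eta_Derive; ring. }
pose proof (H1 t Ht) as N; split.
- transitivity (c t * (c t * Derive c t + s t * Derive s t)
                - s t * (c t * Derive s t - s t * Derive c t)).
  + transitivity (Derive c t * (c t ^ 2 + s t ^ 2)); [rewrite N|]; ring.
  + rewrite V, W; ring.
- transitivity (s t * (c t * Derive c t + s t * Derive s t)
                + c t * (c t * Derive s t - s t * Derive c t)).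
  + transitivity (Derive s t * (c t ^ 2 + s t ^ 2)); [rewrite N|]; ring.
  + rewrite V, W; ring.
Qed.

(** * Curves of configurations *)

Definition velocity (x : body -> R -> R) (t : R) : body -> R := fun i => Derive (x i) t.

Section Curves.
Variable m : body -> R.
Variables x y : body -> R -> R.

Lemma Derive_Imom i t : ex_derive (x i) t -> ex_derive (y i) t ->
  Derive (Imom m x y i) t = dmoments m (at_time x t) (at_time y t) (velocity x t) (velocity y t) i.
Proof.
intros; apply is_derive_unique; unfold Imom, dmoments, velocity, at_time.
auto_derive; auto; fold_eta_Derive; ring.
Qed.

Variable J : R -> Prop.
Hypothesis HJ : open J.

Lemma is_derive2_Imom i t : J t -> derivable2_on J (x i) -> derivable2_on J (y i) ->
  is_derive (Derive (Imom m x y i)) t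
   (2 * m i * (Derive (x i) t ^ 2 + x i t * Derive (Derive (x i)) t
               + Derive (y i) t ^ 2 + y i t * Derive (Derive (y i)) t)).
Proof.
intros Ht [Hx Dx] [Hy Dy].
apply (is_derive_ext_loc
  (fun s => 2 * m i * (x i s * Derive (x i) s + y i s * Derive (y i) s))).
- apply (filter_imp J); auto; intros s Hs; rewrite Derive_Imom; auto.
- auto_derive; [repeat split; auto|]; fold_eta_Derive; ring.
Qed.

Lemma is_derive_angmom t : J t ->
  (forall i, derivable2_on J (x i)) -> (forall i, derivable2_on J (y i)) ->
  is_derive (angmom m x y) t
   (sum3 (fun i => m i * (x i t * Derive (Derive (y i)) t - y i t * Derive (Derive (x i)) t))).
Proof.
intros Ht Hx Hy; unfold angmom, sum3.
assert (A := fun i => proj1 (Hx i) t Ht); assert (B := fun i => proj2 (Hx i) t Ht).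
assert (C := fun i => proj1 (Hy i) t Ht); assert (D := fun i => proj2 (Hy i) t Ht).
auto_derive; [repeat split; auto|]; fold_eta_Derive; ring.
Qed.

Lemma com0_velocity t : J t ->
  (forall i, derivable_on J (x i)) -> (forall i, derivable_on J (y i)) ->
  (forall s, J s -> com0 m (at_time x s) (at_time y s)) ->
  com0 m (velocity x t) (velocity y t).
Proof.
intros Ht Hx Hy Hc; unfold com0, sum3, velocity.
assert (A := fun i => Hx i t Ht); assert (C := fun i => Hy i t Ht).
split.
- transitivity (Derive (fun s => m B1 * x B1 s + m B2 * x B2 s + m B3 * x B3 s) t).
  + symmetry; apply is_derive_unique; auto_derive; [repeat split; auto|].
    fold_eta_Derive; ring.
  + rewrite <- (Derive_const 0 t); apply (Derive_ext_on J HJ); auto.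
    intros s Hs; apply (Hc s Hs).
- transitivity (Derive (fun s => m B1 * y B1 s + m B2 * y B2 s + m B3 * y B3 s) t).
  + symmetry; apply is_derive_unique; auto_derive; [repeat split; auto|].
    fold_eta_Derive; ring.
  + rewrite <- (Derive_const 0 t); apply (Derive_ext_on J HJ); auto.
    intros s Hs; apply (Hc s Hs).
Qed.

Lemma angmom_ext_on x' y' t : J t ->
  (forall s, J s -> forall i, x' i s = x i s /\ y' i s = y i s) ->
  angmom m x' y' t = angmom m x y t.
Proof.
intros Ht E; unfold angmom, sum3.
rewrite !(Derive_ext_on J HJ (x' _) (x _) t Ht), !(Derive_ext_on J HJ (y' _) (y _) t Ht)
  by (intros s Hs; apply (E s Hs)).
destruct (E t Ht B1) as [-> ->], (E t Ht B2) as [-> ->], (E t Ht B3) as [-> ->].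
reflexivity.
Qed.

End Curves.

Lemma com0_acceleration (m : body -> R) (x y : body -> R -> R) (J : R -> Prop) t :
  open J -> J t ->
  (forall i, derivable2_on J (x i)) -> (forall i, derivable2_on J (y i)) ->
  (forall s, J s -> com0 m (at_time x s) (at_time y s)) ->
  com0 m (velocity (fun i => Derive (x i)) t) (velocity (fun i => Derive (y i)) t).
Proof.
intros HJ Ht Hx Hy Hc.
apply (com0_velocity m _ _ J HJ t Ht); try (intro i; apply (Hx i) || apply (Hy i)).
intros s Hs; apply (com0_velocity m x y J HJ s Hs); auto;
  intro i; apply (Hx i) || apply (Hy i).
Qed.

Definition rot_curve_x (c s : R -> R) (x y : body -> R -> R) : body -> R -> R :=
  fun i t => rot_x (c t) (s t) (at_time x t) (at_time y t) i.
Definition rot_curve_y (c s : R -> R) (x y : body -> R -> R) : body -> R -> R :=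
  fun i t => rot_y (c t) (s t) (at_time x t) (at_time y t) i.

Lemma at_time_rot_curve (c s : R -> R) (x y : body -> R -> R) t :
  at_time (rot_curve_x c s x y) t = rot_x (c t) (s t) (at_time x t) (at_time y t) /\
  at_time (rot_curve_y c s x y) t = rot_y (c t) (s t) (at_time x t) (at_time y t).
Proof. split; reflexivity. Qed.

Lemma angmom_rot_curve m (c s : R -> R) x y t :
  ex_derive c t -> ex_derive s t ->
  (forall i, ex_derive (x i) t) -> (forall i, ex_derive (y i) t) ->
  angmom m (rot_curve_x c s x y) (rot_curve_y c s x y) t
  = (c t ^ 2 + s t ^ 2) * angmom m x y t
    + (c t * Derive s t - s t * Derive c t) * Itot (moments m (at_time x t) (at_time y t)).
Proof.
intros Hc Hs Hx Hy.
assert (DX : forall i, Derive (rot_curve_x c s x y i) t = Derive c t * x i t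
           + c t * Derive (x i) t - (Derive s t * y i t + s t * Derive (y i) t)).
{ intro i; apply is_derive_unique; unfold rot_curve_x, rot_x, at_time.
  auto_derive; [repeat split; auto|]; fold_eta_Derive; ring. }
assert (DY : forall i, Derive (rot_curve_y c s x y i) t = Derive s t * x i t
           + s t * Derive (x i) t + (Derive c t * y i t + c t * Derive (y i) t)).
{ intro i; apply is_derive_unique; unfold rot_curve_y, rot_y, at_time.
  auto_derive; [repeat split; auto|]; fold_eta_Derive; ring. }
unfold angmom, sum3; rewrite !DX, !DY.
unfold rot_curve_x, rot_curve_y, rot_x, rot_y, Itot, moments, sum3, at_time; ring.
Qed.

Lemma angmom_rot_angle (m : body -> R) (th : R -> R) (x y : body -> R -> R) t :
  ex_derive th t -> (forall i, ex_derive (x i) t) -> (forall i, ex_derive (y i) t) ->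
  angmom m (rot_curve_x (fun s => cos (th s)) (fun s => sin (th s)) x y)
           (rot_curve_y (fun s => cos (th s)) (fun s => sin (th s)) x y) t
  = angmom m x y t + Derive th t * Itot (moments m (at_time x t) (at_time y t)).
Proof.
intros Hth Hx Hy.
assert (Hc : ex_derive (fun s => cos (th s)) t) by (auto_derive; auto).
assert (Hs : ex_derive (fun s => sin (th s)) t) by (auto_derive; auto).
rewrite angmom_rot_curve, Derive_cos_comp, Derive_sin_comp by auto.
transitivity ((cos (th t) ^ 2 + sin (th t) ^ 2)
  * (angmom m x y t + Derive th t * Itot (moments m (at_time x t) (at_time y t)))); [ring|].
rewrite cos_sq_add_sin_sq; ring.
Qed.

Lemma motion_derivable2 m lo hi x y a b : is_motion m lo hi x y ->
  (forall t, in_J a b t -> in_J lo hi t) ->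
  (forall i, derivable2_on (in_J a b) (x i)) /\ (forall i, derivable2_on (in_J a b) (y i)).
Proof.
intros Hm Hs; split; intro i; split; intros t Ht;
  destruct (Hm t (Hs t Ht)) as (_ & _ & Hn); destruct (Hn i) as (? & ? & ? & ?);
  auto; eexists; eauto.
Qed.

(** * Uniqueness *)

Lemma moduli_curve_determines_motion (m : body -> R) (lo hi : Rbar) (t0 : R)
    (x y x' y' : body -> R -> R) (Om : R) :
  masses_ok m -> in_J lo hi t0 ->
  is_motion m lo hi x y -> is_motion m lo hi x' y' ->
  (forall t, in_J lo hi t -> angmom m x y t = Om) ->
  (forall t, in_J lo hi t -> angmom m x' y' t = Om) ->
  (forall i, x' i t0 = x i t0 /\ y' i t0 = y i t0) ->
  same_moduli_curve lo hi x y x' y' ->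
  forall t, in_J lo hi t -> forall i, x' i t = x i t /\ y' i t = y i t.
Proof.
intros Hm H0 Hmo Hmo' HO HO' Hinit Hsame.
pose proof (open_in_J lo hi) as HJ; set (J := in_J lo hi) in *.
destruct (motion_derivable2 m lo hi x y lo hi Hmo (fun _ H => H)) as [Tx Ty].
destruct (motion_derivable2 m lo hi x' y' lo hi Hmo' (fun _ H => H)) as [Tx' Ty'].
assert (HI : forall s, J s -> 0 < Itot (moments m (at_time x s) (at_time y s))).
{ intros s Hs; apply Itot_moments_pos_of_distinct; auto.
  destruct (Hmo s Hs) as (_ & Hd & _); apply Hd; discriminate. }
set (c := fun s => rot_cos m (at_time x s) (at_time y s) (at_time x' s) (at_time y' s)).
set (sn := fun s => rot_sin m (at_time x s) (at_time y s) (at_time x' s) (at_time y' s)).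
assert (Rot : forall s, J s ->
  at_time x' s = rot_x (c s) (sn s) (at_time x s) (at_time y s) /\
  at_time y' s = rot_y (c s) (sn s) (at_time x s) (at_time y s) /\ c s ^ 2 + sn s ^ 2 = 1).
{ intros s Hs; destruct (Hsame s Hs) as [th Hth].
  apply (rotation_recovered m _ _ _ _ th); [apply Rgt_not_eq, HI, Hs | |];
    apply functional_extensionality; intro i; apply (Hth i). }
assert (Rot_at : forall s, J s -> forall i,
  x' i s = rot_curve_x c sn x y i s /\ y' i s = rot_curve_y c sn x y i s).
{ intros s Hs i; destruct (Rot s Hs) as (Ex & Ey & _); split.
  - change (x' i s) with (at_time x' s i); rewrite Ex; reflexivity.
  - change (y' i s) with (at_time y' s i); rewrite Ey; reflexivity. }
assert (Dc : derivable_on J c /\ derivable_on J sn).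
{ split; [unfold c, rot_cos | unfold sn, rot_sin]; unfold Itot, moments, sum3, at_time;
    solve_derivable_on; intros s Hs; apply Rgt_not_eq, (HI s Hs). }
destruct Dc as [Dc Ds].
assert (Dzero : forall t, J t -> Derive c t = 0 /\ Derive sn t = 0).
{ intros t Ht; apply (unit_circle_rigid J c sn t HJ Ht (Dc t Ht) (Ds t Ht));
    [intros u Hu; apply (Rot u Hu)|].
  pose proof (angmom_rot_curve m c sn x y t (Dc t Ht) (Ds t Ht)
                (fun i => proj1 (Tx i) t Ht) (fun i => proj1 (Ty i) t Ht)) as E.
  rewrite <- (angmom_ext_on m _ _ J HJ x' y' t Ht Rot_at), HO', HO,
    (proj2 (proj2 (Rot t Ht))) in E by auto.
  pose proof (HI t Ht) as P.
  apply (Rmult_eq_reg_r (Itot (moments m (at_time x t) (at_time y t)))); lra. }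
assert (Cst : forall t, J t -> c t = 1 /\ sn t = 0).
{ assert (E0 : at_time x' t0 = at_time x t0 /\ at_time y' t0 = at_time y t0)
    by (split; apply functional_extensionality; intro i; apply (Hinit i)).
  intros t Ht; rewrite (in_J_const lo hi c t0 t), (in_J_const lo hi sn t0 t); auto.
  - unfold c, sn; destruct E0 as [-> ->].
    rewrite rot_cos_self, rot_sin_self by (apply Rgt_not_eq, HI, H0); auto.
  - intros s Hs; rewrite <- (proj2 (Dzero s Hs)); apply Derive_correct, Ds, Hs.
  - intros s Hs; rewrite <- (proj1 (Dzero s Hs)); apply Derive_correct, Dc, Hs. }
intros t Ht i; destruct (Rot_at t Ht i) as [-> ->].
unfold rot_curve_x, rot_curve_y, rot_x, rot_y, at_time.
destruct (Cst t Ht) as [-> ->]; split; ring.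
Qed.

(** * The moduli curve solves the reduced equation *)

Lemma reduced_rhs_along (m : body -> R) sg Om (x y : body -> R -> R) (J : R -> Prop) t i :
  open J -> J t -> masses_ok m -> (sg = 1 \/ sg = -1) ->
  (forall i, derivable_on J (x i)) -> (forall i, derivable_on J (y i)) ->
  (forall s, J s -> com0 m (at_time x s) (at_time y s)) ->
  0 < sg * signed_area (at_time x t) (at_time y t) -> angmom m x y t = Om ->
  reduced_rhs Om sg m (at_time (Imom m x y) t) (fun j => Derive (Imom m x y j) t) i
  = 2 * m i * (Derive (x i) t ^ 2 + Derive (y i) t ^ 2)
    + 2 * (x i t * force_x m (at_time x t) (at_time y t) i
           + y i t * force_y m (at_time x t) (at_time y t) i).
Proof.
intros HJ Ht Hm Hsg Dx Dy Hc Hp <-.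
replace (fun j => Derive (Imom m x y j) t)
  with (dmoments m (at_time x t) (at_time y t) (velocity x t) (velocity y t))
  by (apply functional_extensionality; intro j; rewrite Derive_Imom; auto;
      [apply Dx | apply Dy]; auto).
apply reduced_rhs_moments; auto; [apply Hc, Ht | apply (com0_velocity m x y J HJ t Ht); auto].
Qed.

Lemma Imom_reduced_solution (m : body -> R) (lo hi : Rbar) (x y : body -> R -> R) Om
    (a b : Rbar) sg :
  masses_ok m -> is_motion m lo hi x y ->
  (forall t, in_J lo hi t -> angmom m x y t = Om) -> (sg = 1 \/ sg = -1) ->
  (forall t, in_J a b t -> in_J lo hi t) ->
  (forall t, in_J a b t -> 0 < sg * signed_area (at_time x t) (at_time y t)) ->
  reduced_solution m Om sg a b (Imom m x y).
Proof.
intros Hm Hmo HO Hsg Hsub Hp t Ht.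
pose proof (open_in_J a b) as HJ.
destruct (motion_derivable2 m lo hi x y a b Hmo Hsub) as [Tx Ty].
assert (Hc : forall s, in_J a b s -> com0 m (at_time x s) (at_time y s))
  by (intros s Hs; apply (Hmo s (Hsub s Hs))).
assert (HA : signed_area (at_time x t) (at_time y t) <> 0)
  by (intro E; specialize (Hp t Ht); rewrite E in Hp; lra).
destruct (Hmo t (Hsub t Ht)) as (_ & _ & Hn).
split; [|split; [|split]].
- intro i; apply Rmult_lt_0_compat; [apply masses_pos, Hm|].
  exact (sqnorm_pos_of_area m (at_time x t) (at_time y t) i Hm (Hc t Ht) HA).
- intro i; change (at_time (Imom m x y) t) with (moments m (at_time x t) (at_time y t)).
  rewrite rsq_opp_moments by auto.
  apply (sqrt_lt_0_alt 0); rewrite sqrt_0.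
  apply (dist_pos_of_area _ _ (nxt i) (nxt (nxt i))); auto; destruct i; discriminate.
- change (at_time (Imom m x y) t) with (moments m (at_time x t) (at_time y t)).
  rewrite heron_moments by auto; pose proof (pow2_gt_0 _ HA); lra.
- intro i; destruct (Hn i) as (Ex & Ey & Dx & Dy); split.
  + unfold Imom; auto_derive; auto.
  + rewrite (reduced_rhs_along m sg Om x y (in_J a b)); auto;
      try (intro j; apply (Tx j) || apply (Ty j)).
    pose proof (is_derive2_Imom m x y _ HJ i t Ht (Tx i) (Ty i)) as D.
    assert (Ax : Derive (Derive (x i)) t = force_x m (at_time x t) (at_time y t) i / m i)
      by (apply is_derive_unique, Dx).
    assert (Ay : Derive (Derive (y i)) t = force_y m (at_time x t) (at_time y t) i / m i)
      by (apply is_derive_unique, Dy).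
    rewrite Ax, Ay in D.
    replace (_ + _) with (2 * m i * (Derive (x i) t ^ 2
        + x i t * (force_x m (at_time x t) (at_time y t) i / m i)
        + Derive (y i) t ^ 2 + y i t * (force_y m (at_time x t) (at_time y t) i / m i)));
      [exact D|].
    field; apply Rgt_not_eq, masses_pos, Hm.
Qed.

(** * Realisation of solutions *)

Lemma newton_of_reduced (m : body -> R) Om sg (x y : body -> R -> R) (J : R -> Prop) t :
  open J -> J t -> masses_ok m -> (sg = 1 \/ sg = -1) ->
  (forall i, derivable2_on J (x i)) -> (forall i, derivable2_on J (y i)) ->
  (forall s, J s -> com0 m (at_time x s) (at_time y s)) ->
  (forall s, J s -> angmom m x y s = Om) ->
  0 < sg * signed_area (at_time x t) (at_time y t) ->
  (forall i, is_derive (Derive (Imom m x y i)) t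
     (reduced_rhs Om sg m (at_time (Imom m x y) t) (fun j => Derive (Imom m x y j) t) i)) ->
  forall i, is_derive (Derive (x i)) t (force_x m (at_time x t) (at_time y t) i / m i) /\
            is_derive (Derive (y i)) t (force_y m (at_time x t) (at_time y t) i / m i).
Proof.
intros HJ Ht Hm Hsg Tx Ty Hc HO Hp HD.
assert (HA : signed_area (at_time x t) (at_time y t) <> 0)
  by (intro E; rewrite E in Hp; lra).
set (px := at_time x t); set (py := at_time y t).
set (ex := fun i => m i * Derive (Derive (x i)) t - force_x m px py i).
set (ey := fun i => m i * Derive (Derive (y i)) t - force_y m px py i).
assert (Radial : forall i, px i * ex i + py i * ey i = 0).
{ intro i; pose proof (is_derive_unique _ _ _ (HD i)) as U.
  rewrite (reduced_rhs_along m sg Om x y J), (is_derive_unique _ _ _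
    (is_derive2_Imom m x y J HJ i t Ht (Tx i) (Ty i))) in U; auto;
    try (intro j; apply (Tx j) || apply (Ty j)).
  unfold ex, ey, px, py, at_time in *; lra. }
destruct (com0_acceleration m x y J t HJ Ht Tx Ty Hc) as [Ax Ay].
destruct (forces_balanced m px py HA) as (Fx & Fy & Ft).
assert (Torque : Derive (angmom m x y) t = 0).
{ rewrite <- (Derive_const Om t); apply (Derive_ext_on J HJ); auto. }
rewrite (is_derive_unique _ _ _ (is_derive_angmom m x y J t Ht Tx Ty)) in Torque.
assert (Zero : forall i, ex i = 0 /\ ey i = 0).
{ apply (tangential_equilibrium_zero m px py ex ey Hm (Hc t Ht) HA Radial);
    unfold sum3, ex, ey, px, py, velocity, at_time in *; lra. }
intro i; destruct (Zero i) as [Zx Zy]; unfold ex, ey in Zx, Zy.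
pose proof (masses_pos m i Hm).
split.
- replace (force_x _ _ _ i / m i) with (Derive (Derive (x i)) t) by (field_simplify_eq; lra).
  apply Derive_correct, (Tx i), Ht.
- replace (force_y _ _ _ i / m i) with (Derive (Derive (y i)) t) by (field_simplify_eq; lra).
  apply Derive_correct, (Ty i), Ht.
Qed.

Lemma motion_of_reduced_solution (m : body -> R) (lo hi : Rbar) Om sg
    (Ic x y : body -> R -> R) :
  masses_ok m -> (sg = 1 \/ sg = -1) -> reduced_solution m Om sg lo hi Ic ->
  (forall i, derivable2_on (in_J lo hi) (x i)) -> (forall i, derivable2_on (in_J lo hi) (y i)) ->
  (forall t, in_J lo hi t -> com0 m (at_time x t) (at_time y t)) ->
  (forall t, in_J lo hi t -> angmom m x y t = Om) ->
  (forall t, in_J lo hi t -> forall i, Imom m x y i t = Ic i t) ->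
  (forall t, in_J lo hi t -> 0 < sg * signed_area (at_time x t) (at_time y t)) ->
  is_motion m lo hi x y.
Proof.
intros Hm Hsg Hsol Tx Ty Hc HO HI Hp t Ht.
pose proof (open_in_J lo hi) as HJ; set (J := in_J lo hi) in *.
assert (HA : signed_area (at_time x t) (at_time y t) <> 0)
  by (pose proof (Hp t Ht) as P; intro E; rewrite E in P; lra).
assert (DIc : forall j, Derive (Ic j) t = Derive (Imom m x y j) t).
{ intro j; apply (Derive_ext_on J HJ); auto; intros s Hs; symmetry; apply HI, Hs. }
assert (HD : forall i, is_derive (Derive (Imom m x y i)) t
   (reduced_rhs Om sg m (at_time (Imom m x y) t) (fun j => Derive (Imom m x y j) t) i)).
{ intro i; destruct (Hsol t Ht) as (_ & _ & _ & D); destruct (D i) as [_ D2].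
  replace (at_time (Imom m x y) t) with (at_time Ic t)
    by (apply functional_extensionality; intro j; symmetry; apply HI, Ht).
  replace (fun j => Derive (Imom m x y j) t) with (fun j => Derive (Ic j) t)
    by (apply functional_extensionality; apply DIc).
  apply (is_derive_ext_loc (fun s => Derive (Ic i) s)); [|exact D2].
  apply (filter_imp J); [|apply HJ, Ht].
  intros s Hs; apply (Derive_ext_on J HJ); auto; intros u Hu; symmetry; apply HI, Hu. }
pose proof (newton_of_reduced m Om sg x y J t HJ Ht Hm Hsg Tx Ty Hc HO (Hp t Ht) HD) as N.
split; [apply Hc, Ht | split].
- intros i j Hij; exact (distinct_of_area _ _ i j HA Hij).
- intro i; destruct (N i) as [Nx Ny].
  split; [apply (Tx i), Ht | split; [apply (Ty i), Ht | split; assumption]].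
Qed.

Definition ref_curve_x (m : body -> R) (Ic : body -> R -> R) : body -> R -> R :=
  fun i t => ref_x m (at_time Ic t) i.
Definition ref_curve_y (sg : R) (m : body -> R) (Ic : body -> R -> R) : body -> R -> R :=
  fun i t => ref_y sg m (at_time Ic t) i.

Lemma ref_curve_derivable2 (m : body -> R) Om sg lo hi (Ic : body -> R -> R) :
  masses_ok m -> reduced_solution m Om sg lo hi Ic ->
  (forall i, derivable2_on (in_J lo hi) (ref_curve_x m Ic i)) /\
  (forall i, derivable2_on (in_J lo hi) (ref_curve_y sg m Ic i)).
Proof.
intros Hm Hsol.
pose proof (open_in_J lo hi) as HJ; set (J := in_J lo hi) in *; pose_masses_pos m Hm.
assert (HIp : forall s, J s -> forall i, 0 < Ic i s) by (intros s Hs; apply (Hsol s Hs)).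
assert (TIc : forall i, derivable2_on J (Ic i)).
{ intro i; split; intros s Hs; destruct (Hsol s Hs) as (_ & _ & _ & D);
    destruct (D i) as [D1 D2]; auto; eexists; exact D2. }
assert (Tr : derivable2_on J (fun t => ref_r1 m (at_time Ic t))).
{ unfold ref_r1, at_time; solve_derivable2_on HJ; intros s Hs; try lra.
  apply Rdiv_lt_0_compat; auto; apply HIp, Hs. }
assert (Hr : forall s, J s -> ref_r1 m (at_time Ic s) <> 0)
  by (intros s Hs; apply Rgt_not_eq, ref_r1_pos; auto; apply HIp, Hs).
assert (TD : derivable2_on J (fun t => Delta sg m (at_time Ic t))).
{ unfold Delta, heron, rsq_opp, Itot, sum3, at_time; cbv beta zeta iota delta [nxt].
  solve_derivable2_on HJ; intros s Hs;
    first [ apply (Hsol s Hs) | repeat (apply Rmult_integral_contrapositive; split); lra ]. }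
assert (Td : derivable2_on J (fun t => ref_dot12 m (at_time Ic t))).
{ unfold ref_dot12, at_time; solve_derivable2_on HJ; intros s Hs.
  repeat (apply Rmult_integral_contrapositive; split); lra. }
split; intro i; destruct i; unfold ref_curve_x, ref_curve_y, ref_x, ref_y; cbv beta iota;
  solve_derivable2_on HJ; auto; intros s Hs; lra.
Qed.

Lemma ref_curve_angle (m : body -> R) Om sg (lo hi : Rbar) (Ic : body -> R -> R) (t0 th0 : R) :
  masses_ok m -> in_J lo hi t0 -> reduced_solution m Om sg lo hi Ic ->
  exists th, th t0 = th0 /\ derivable2_on (in_J lo hi) th /\
    forall t, in_J lo hi t -> Derive th t * Itot (at_time Ic t)
                               = Om - angmom m (ref_curve_x m Ic) (ref_curve_y sg m Ic) t.
Proof.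
intros Hm H0 Hsol.
pose proof (open_in_J lo hi) as HJ; set (J := in_J lo hi) in *.
destruct (ref_curve_derivable2 m Om sg lo hi Ic Hm Hsol) as [TQx TQy].
assert (HI : forall s, J s -> 0 < Itot (at_time Ic s)).
{ intros s Hs; destruct (Hsol s Hs) as [HIp _]; unfold Itot, sum3, at_time.
  pose proof (HIp B1); pose proof (HIp B2); pose proof (HIp B3); lra. }
assert (TIc : forall i, derivable2_on J (Ic i)).
{ intro i; split; intros s Hs; destruct (Hsol s Hs) as (_ & _ & _ & D);
    destruct (D i) as [D1 D2]; auto; eexists; exact D2. }
set (g := fun t => (Om - angmom m (ref_curve_x m Ic) (ref_curve_y sg m Ic) t)
                   / Itot (at_time Ic t)).
assert (Dg : derivable_on J g).
{ unfold g, angmom, Itot, sum3, at_time; solve_derivable_on.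
  intros s Hs; apply Rgt_not_eq, (HI s Hs). }
destruct (in_J_primitive lo hi g t0 th0 H0 Dg) as [th [Hth0 Hth]].
exists th; split; [exact Hth0 | split].
- split; [intros t Ht; eexists; apply Hth, Ht|].
  apply (derivable_on_ext J HJ _ g); auto; intros s Hs; apply is_derive_unique, Hth, Hs.
- intros t Ht; rewrite (is_derive_unique _ _ _ (Hth t Ht)); unfold g.
  field; apply Rgt_not_eq, (HI t Ht).
Qed.

Lemma reduced_solution_realized (m : body -> R) (lo hi : Rbar) (t0 Om sg : R)
    (Ic : body -> R -> R) (x0 y0 : body -> R) :
  masses_ok m -> in_J lo hi t0 -> (sg = 1 \/ sg = -1) ->
  reduced_solution m Om sg lo hi Ic -> com0 m x0 y0 -> 0 < sg * signed_area x0 y0 ->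
  (forall i, m i * (x0 i ^ 2 + y0 i ^ 2) = Ic i t0) ->
  exists x y : body -> R -> R,
    is_motion m lo hi x y /\
    (forall i, x i t0 = x0 i /\ y i t0 = y0 i) /\
    (forall t, in_J lo hi t -> angmom m x y t = Om) /\
    (forall t, in_J lo hi t ->
       (forall i, Imom m x y i t = Ic i t) /\ 0 < sg * signed_area (at_time x t) (at_time y t)).
Proof.
intros Hm H0 Hsg Hsol Hc0 Hp0 HI0.
pose proof (open_in_J lo hi) as HJ; set (J := in_J lo hi) in *.
destruct (ref_curve_derivable2 m Om sg lo hi Ic Hm Hsol) as [TQx TQy].
set (Qx := ref_curve_x m Ic) in *; set (Qy := ref_curve_y sg m Ic) in *.
assert (HIp : forall s, J s -> forall i, 0 < Ic i s) by (intros s Hs; apply (Hsol s Hs)).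
assert (Hh : forall s, J s -> 0 < heron m (at_time Ic s)) by (intros s Hs; apply (Hsol s Hs)).
assert (HQ : forall s, J s -> moments m (at_time Qx s) (at_time Qy s) = at_time Ic s)
  by (intros s Hs; apply moments_ref; auto; [apply HIp | apply Rlt_le, Hh]; exact Hs).
destruct (ref_rotation sg m x0 y0 Hm Hc0 Hsg Hp0) as [th0 [Ex0 Ey0]].
destruct (ref_curve_angle m Om sg lo hi Ic t0 th0 Hm H0 Hsol) as (th & Hth0 & Tth & Hth).
set (X := rot_curve_x (fun s => cos (th s)) (fun s => sin (th s)) Qx Qy).
set (Y := rot_curve_y (fun s => cos (th s)) (fun s => sin (th s)) Qx Qy).
assert (TX : forall i, derivable2_on J (X i))
  by (intro i; unfold X, rot_curve_x, rot_x, at_time; solve_derivable2_on HJ).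
assert (TY : forall i, derivable2_on J (Y i))
  by (intro i; unfold Y, rot_curve_y, rot_y, at_time; solve_derivable2_on HJ).
assert (HX : forall t, J t -> moments m (at_time X t) (at_time Y t) = at_time Ic t /\
    com0 m (at_time X t) (at_time Y t) /\ 0 < sg * signed_area (at_time X t) (at_time Y t))
  by (intros t Ht; apply (rot_ref sg m _ _ _ (th t));
        first [exact Hm | exact Hsg | apply HIp, Ht | apply Hh, Ht | reflexivity]).
assert (Hang : forall t, J t -> angmom m X Y t = Om).
{ intros t Ht; unfold X, Y; rewrite angmom_rot_angle;
    [| apply Tth, Ht | intro i; apply (TQx i), Ht | intro i; apply (TQy i), Ht].
  rewrite (HQ t Ht), (Hth t Ht); unfold Qx, Qy; ring. }
exists X, Y; split; [|split; [|split; [exact Hang|]]].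
- apply (motion_of_reduced_solution m lo hi Om sg Ic); auto;
    intros t Ht; try intro i; apply HX in Ht as (E & ? & ?); auto.
  change (Imom m X Y i t) with (moments m (at_time X t) (at_time Y t) i); rewrite E; reflexivity.
- assert (E0 : at_time Ic t0 = moments m x0 y0)
    by (apply functional_extensionality; intro i; symmetry; apply HI0).
  assert (EQ : at_time Qx t0 = ref_x m (moments m x0 y0) /\
               at_time Qy t0 = ref_y sg m (moments m x0 y0)) by (rewrite <- E0; split; reflexivity).
  intro i; change (X i t0) with (at_time X t0 i); change (Y i t0) with (at_time Y t0 i).
  unfold X, Y; rewrite (proj1 (at_time_rot_curve _ _ _ _ t0)),
    (proj2 (at_time_rot_curve _ _ _ _ t0)), Hth0, (proj1 EQ), (proj2 EQ), Ex0, Ey0.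
  split; reflexivity.
- intros t Ht; apply HX in Ht as (E & _ & ?); split; auto; intro i.
  change (Imom m X Y i t) with (moments m (at_time X t) (at_time Y t) i); rewrite E; reflexivity.
Qed.

Theorem theoremE1 (m : body -> R) (lo hi : Rbar) (t0 : R) :
  masses_ok m -> in_J lo hi t0 ->
  (* (1) determination by moduli curve, initial position and angular momentum *)
  (forall (x y x' y' : body -> R -> R) (Om : R),
     is_motion m lo hi x y -> is_motion m lo hi x' y' ->
     noncollinear (at_time x t0) (at_time y t0) ->
     (forall t, in_J lo hi t -> angmom m x y t = Om) ->
     (forall t, in_J lo hi t -> angmom m x' y' t = Om) ->
     (forall i, x' i t0 = x i t0 /\ y' i t0 = y i t0) ->
     same_moduli_curve lo hi x y x' y' ->
     forall t, in_J lo hi t -> forall i, x' i t = x i t /\ y' i t = y i t) /\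
  (* (2) the moduli curve solves the Omega-reduced Newton equation
         (wherever the configuration is non-collinear, with orientation sg) *)
  (forall (x y : body -> R -> R) (Om : R),
     is_motion m lo hi x y ->
     (forall t, in_J lo hi t -> angmom m x y t = Om) ->
     forall (a b : Rbar) (sg : R), (sg = 1 \/ sg = -1) ->
     (forall t, in_J a b t -> in_J lo hi t) ->
     (forall t, in_J a b t -> 0 < sg * signed_area (at_time x t) (at_time y t)) ->
     reduced_solution m Om sg a b (Imom m x y)) /\
  (* (3) converse: realization of any solution curve *)
  (forall (Om sg : R) (Ic : body -> R -> R) (x0 y0 : body -> R),
     (sg = 1 \/ sg = -1) ->
     reduced_solution m Om sg lo hi Ic ->
     com0 m x0 y0 ->
     0 < sg * signed_area x0 y0 ->
     (forall i, m i * (x0 i ^ 2 + y0 i ^ 2) = Ic i t0) ->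
     exists x y : body -> R -> R,
       is_motion m lo hi x y /\
       (forall i, x i t0 = x0 i /\ y i t0 = y0 i) /\
       (forall t, in_J lo hi t -> angmom m x y t = Om) /\
       (forall t, in_J lo hi t ->
          (forall i, Imom m x y i t = Ic i t) /\
          0 < sg * signed_area (at_time x t) (at_time y t))).
Proof.
intros Hm H0; split; [|split].
-
  intros x y x' y' Om Hmo Hmo' _ HO HO' Hinit Hsame.
  exact (moduli_curve_determines_motion m lo hi t0 x y x' y' Om
           Hm H0 Hmo Hmo' HO HO' Hinit Hsame).
- intros x y Om Hmo HO a b sg Hsg Hsub Hp.
  exact (Imom_reduced_solution m lo hi x y Om a b sg Hm Hmo HO Hsg Hsub Hp).
- intros Om sg Ic x0 y0 Hsg Hsol Hc0 Hp0 HI0.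
  exact (reduced_solution_realized m lo hi t0 Om sg Ic x0 y0
           Hm H0 Hsg Hsol Hc0 Hp0 HI0).
Qed.
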